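(* Let $\mu,\nu$ be finite measures on $\mathbb R$ with finite first moments such that $\mu\le_E\nu$. Define $\beta=(\nu(\mathbb R)-\mu(\mathbb R))\,\delta_{\frac{\overline\nu-\overline\mu}{\nu(\mathbb R)-\mu(\mathbb R)}}$ (with $\beta$ the zero measure if $\nu(\mathbb R)=\mu(\mathbb R)$). Then $\nu-\mu\ge_{cx}\beta$, i.e. $\int f\,d\beta\le\int f\,d\nu-\int f\,d\mu$ for every convex $f:\mathbb R\to\mathbb R$. Consequently $P_\nu-P_\mu\ge P_\beta$, where $P_\beta(k)=\big((\nu(\mathbb R)-\mu(\mathbb R))k-(\overline\nu-\overline\mu)\big)^+$.
   Context: For a finite measure $\eta$ on $\mathbb R$ with finite first moment, $\overline\eta=\int x\,\eta(dx)$ and $P_\eta(k)=\int(k-x)^+\eta(dx)$. $\mu\le_E\nu$ means $\int f\,d\mu\le\int f\,d\nu$ for all non-negative convex $f:\mathbb R\to\mathbb R_+$. The convex order $\le_{cx}$ means comparison of integrals of all convex functions. *)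

From HB Require Import structures.
From mathcomp Require Import all_boot all_order all_algebra.
From mathcomp Require Import all_classical all_reals all_analysis.
Set Implicit Arguments. Unset Strict Implicit. Unset Printing Implicit Defensive.
Import Order.TTheory GRing.Theory Num.Theory.
Local Open Scope classical_set_scope.
Local Open Scope ring_scope.

Definition mass (R : realType) (eta : {measure set R -> \bar R}) : R :=
  fine (eta setT).

Definition moment1 (R : realType) (eta : {measure set R -> \bar R}) : R :=
  fine (\int[eta]_x (x%:E))%E.

Definition Pput (R : realType) (eta : {measure set R -> \bar R}) (k : R)
  : \bar R := (\int[eta]_x (Num.max (k - x) 0)%:E)%E.

Definition convexR (R : realType) (f : R -> R) : Prop :=
  convex_function (E := R^o) setT f.

Definition le_E (R : realType) (mu nu : {measure set R -> \bar R}) : Prop :=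
  forall f : R -> R, convexR f -> (forall x, 0 <= f x) ->
    (\int[mu]_x (f x)%:E <= \int[nu]_x (f x)%:E)%E.

(* the mass difference, clipped at 0 only to build a measure; under mu <=_E nu
   it is nonnegative, so the clipping is inactive *)
Lemma max0_ge0 (R : realType) (x : R) : 0 <= Num.max 0 x.
Proof. by rewrite le_max lexx. Qed.

Definition beta_mass (R : realType) (mu nu : {measure set R -> \bar R})
  : {nonneg R} := NngNum (max0_ge0 (mass nu - mass mu)).

Definition beta (R : realType) (mu nu : {measure set R -> \bar R})
  : {measure set R -> \bar R} :=
  mscale (beta_mass mu nu)
    (\d_((moment1 nu - moment1 mu) / (mass nu - mass mu)) : {measure set R -> \bar R}).

Set Warnings "-notation-overridden,-ambiguous-paths,-notation-incompatible-prefix".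
From HB Require Import structures.
From mathcomp Require Import all_boot all_order all_algebra.
From mathcomp Require Import all_classical all_reals all_analysis.
From mathcomp Require Import measurable_realfun ring lra.
Import Order.TTheory GRing.Theory Num.Theory.
Local Open Scope classical_set_scope.
Local Open Scope ring_scope.

(* Let c be the atom of beta and m = nu(R) - mu(R) >= 0 its mass.  A convex f
   has a supporting line l at c; then f - l is convex and nonnegative, so mu <=_E nu
   bounds its integrals, while the affine l integrates against nu - mu to
   m l(c) = m f(c) because m c = bar nu - bar mu.  When m = 0 this balance
   requires bar nu = bar mu, obtained by applying mu <=_E nu to (n + s x)^+ and
   letting n -> oo, since int (n + s x)^- d nu -> 0 by dominated convergence. *)

Lemma max0_split (R : realDomainType) (u : R) : Num.max u 0 = Num.max (- u) 0 + u.
Proof.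
case: (leP 0 u) => u0; first by rewrite max_r ?oppr_le0 // add0r.
by rewrite max_l ?oppr_ge0 ?ltW // addNr.
Qed.

Section convexR.
Context {R : realType}.
Implicit Types (f g : R -> R) (a c k s x y t : R).

Lemma convexRP f : convexR f <->
  (forall x y t, 0 <= t -> t <= 1 ->
     f (t * x + (1 - t) * y) <= t * f x + (1 - t) * f y).
Proof.
split=> [cf x y t t0 t1 | cf t x y _ _].
  have t01 : Itv.num_sem `[0%Z, 1%Z] t.
    by rewrite /Itv.num_sem /= in_itv /= t0 t1 ger0_real.
  have := cf (@Itv.mk _ (@Itv.num_sem R) (Itv.Real `[0%Z, 1%Z]) t t01) x y.
  by rewrite !inE; apply.
have /andP[t0 t1] : 0 <= t%:num <= 1 by rewrite ge0 le1.
exact: cf.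
Qed.

Lemma convexR_cst a : convexR (fun=> a).
Proof. by apply/convexRP => x y t _ _; rewrite -mulrDl subrKC mul1r. Qed.

Lemma convexR_max0_affine a s : convexR (fun x => Num.max (a + s * x) 0).
Proof.
apply/convexRP => x y t t0 t1; rewrite ge_max; apply/andP; split; last first.
  by rewrite addr_ge0 // mulr_ge0 // ?le_max ?lexx ?orbT // subr_ge0.
have hx : a + s * x <= Num.max (a + s * x) 0 by rewrite le_max lexx.
have hy : a + s * y <= Num.max (a + s * y) 0 by rewrite le_max lexx.
have t1' : 0 <= 1 - t by rewrite subr_ge0.
nra.
Qed.

Lemma convexR_put k : convexR (fun x => Num.max (k - x) 0).
Proof.
have -> : (fun x => Num.max (k - x) 0) = (fun x => Num.max (k + -1 * x) 0).
  by apply/funext => x; rewrite mulN1r.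
exact: convexR_max0_affine.
Qed.

Lemma convexR_sub_affine {f} a s :
  convexR f -> convexR (fun x => f x - (a + s * x)).
Proof.
move=> /convexRP cf; apply/convexRP => x y t t0 t1.
have := cf x y t t0 t1; lra.
Qed.

Lemma convexR_three_chord {f x c y} : convexR f -> x < c -> c < y ->
  (y - x) * f c <= (y - c) * f x + (c - x) * f y.
Proof.
move=> /convexRP cf xc cy; have yx : 0 < y - x by lra.
set t := (y - c) / (y - x).
have t0 : 0 <= t by rewrite divr_ge0 //; lra.
have t1 : t <= 1 by rewrite ler_pdivrMr //; lra.
have -> : c = t * x + (1 - t) * y by rewrite /t; field; lra.
have := cf x y t t0 t1.
have -> : y - (t * x + (1 - t) * y) = t * (y - x) by rewrite /t; field; lra.
have -> : t * x + (1 - t) * y - x = (1 - t) * (y - x) by ring.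
nra.
Qed.

Lemma convexR_slope_le {f x c y} : convexR f -> x < c -> c < y ->
  (f c - f x) / (c - x) <= (f y - f c) / (y - c).
Proof.
move=> cf xc cy; have := convexR_three_chord cf xc cy.
rewrite ler_pdivrMr ?subr_gt0 // mulrAC ler_pdivlMr ?subr_gt0 //; nra.
Qed.

Lemma convexR_support_line {f} c : convexR f ->
  exists s, forall x, f c + s * (x - c) <= f x.
Proof.
move=> cf.
pose left_slopes := [set (f c - f x) / (c - x) | x in [set x | x < c]].
have right_ub y : c < y -> ubound left_slopes ((f y - f c) / (y - c)).
  by move=> cy _ [x /= xc <-]; exact: convexR_slope_le.
have slopes_sup : has_sup left_slopes.
  split; first by exists ((f c - f (c - 1)) / (c - (c - 1))), (c - 1) => //=; lra.
  by exists ((f (c + 1) - f c) / (c + 1 - c)); apply: right_ub; lra.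
exists (sup left_slopes) => x.
have [xc|cx|->] := ltgtP x c; last by rewrite subrr mulr0 addr0.
- have : (f c - f x) / (c - x) <= sup left_slopes.
    by apply: sup_upper_bound => //; exists x.
  rewrite ler_pdivrMr ?subr_gt0 //; nra.
- have : sup left_slopes <= (f x - f c) / (x - c).
    by apply: ge_sup (right_ub x cx); case: slopes_sup.
  rewrite ler_pdivlMr ?subr_gt0 //; nra.
Qed.

Lemma convexR_le_toward_min {g} c v t : convexR g -> (forall x, g c <= g x) ->
  0 <= t -> t <= 1 -> g (t * v + (1 - t) * c) <= g v.
Proof.
move=> /convexRP cg gc t0 t1; have := cg v c t t0 t1; have := gc v.
have t1' : 0 <= 1 - t by rewrite subr_ge0.
nra.
Qed.

(* Minus its supporting line at 0, f is nonincreasing on ]-oo, 0] and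
   nondecreasing on [0, +oo[, so it is a sum of two monotone functions. *)
Lemma convexR_measurable f : convexR f -> measurable_fun setT f.
Proof.
move=> cf; have [s hs] := convexR_support_line 0 cf.
pose g x := f x - (f 0 + s * x).
have cg : convexR g := convexR_sub_affine (f 0) s cf.
have g0 : g 0 = 0 by rewrite /g mulr0 addr0 subrr.
have g_min x : g 0 <= g x by rewrite g0 subr_ge0; have := hs x; rewrite subr0.
have g_mono u v : 0 <= u <= v \/ v <= u <= 0 -> g u <= g v.
  have [-> uv|v0 uv] := eqVneq v 0.
    by have -> : u = 0 by case: uv => /andP[]; lra.
  have -> : u = u / v * v + (1 - u / v) * 0 by rewrite mulr0 addr0 mulfVK.
  apply: convexR_le_toward_min => //.
    by case: uv => /andP[? ?]; [rewrite divr_ge0 | rewrite -divrNN divr_ge0]; lra.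
  case: uv => /andP[? ?]; [rewrite ler_pdivrMr | rewrite ler_ndivrMr]; lra.
have -> : f = (fun x => g (Num.max x 0) + g (Num.min x 0) + (f 0 + s * x)).
  by apply/funext => x /=; case: leP => _; rewrite g0 /g; ring.
apply: measurable_funD; [apply: measurable_funD|].
- apply: nondecreasing_measurable => // a b ab; apply: g_mono; left.
  by apply/andP; split; [rewrite le_max lexx orbT | exact: le_max2].
- apply: nonincreasing_measurable => // a b ab; apply: g_mono; right.
  by apply/andP; split; [exact: le_min2 | rewrite ge_min lexx orbT].
- by apply: measurable_funD => //; apply: measurable_funM.
Qed.

End convexR.

Section integral_lemmas.
Local Open Scope ereal_scope.
Context d (T : measurableType d) (R : realType).
Implicit Types (mu : {measure set T -> \bar R}) (f g h : T -> R).

Lemma integral_mscale_dirac (k : {nonneg R}) (a : T) f : measurable_fun setT f ->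
  \int[mscale k \d_a]_x (f x)%:E = (k%:num * f a)%:E.
Proof.
move=> mf; have mfE : measurable_fun setT (EFin \o f) by exact/measurable_EFinP.
rewrite integralE !ge0_integral_mscale //;
  [|exact: measurable_funeneg|exact: measurable_funepos].
rewrite !integral_dirac ?diracT ?mul1e //;
  [|exact: measurable_funeneg|exact: measurable_funepos].
rewrite -muleBr ?add_def_funeposneg // EFinM; congr (_ * _).
by have /(congr1 (fun F => F a)) -> := funeposneg (fun x => (f x)%:E).
Qed.

Lemma integral_pinfty_of_not_integrable {mu f h} : measurable_fun setT f ->
  mu.-integrable setT (EFin \o h) -> (forall x, h x <= f x)%R ->
  ~ mu.-integrable setT (EFin \o f) -> \int[mu]_x (f x)%:E = +oo.
Proof.
move=> mf ih hf nif; have mfE : measurable_fun setT (EFin \o f) by exact/measurable_EFinP.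
have neg_fin : \int[mu]_x (EFin \o f)^\- x \is a fin_num.
  rewrite ge0_fin_numE; last by apply: integral_ge0 => x _; exact: funeneg_ge0.
  apply: le_lt_trans (integral_funeneg_lt_pinfty measurableT ih).
  apply: ge0_le_integral => //.
  - exact: measurable_funeneg.
  - by apply: measurable_funeneg; exact: measurable_int ih.
  - move=> x _; apply: (funeneg_le (D := setT)); last by rewrite in_setT.
    by move=> y _; rewrite lee_fin.
have pos_pinfty : \int[mu]_x (EFin \o f)^\+ x = +oo.
  have abs_pinfty : \int[mu]_x `|(f x)%:E| = +oo.
    apply/eqP; rewrite eq_le leey /= leNgt; apply/negP => abs_fin.
    by apply: nif; apply/integrableP.
  move: abs_pinfty; rewrite -[fun x => _]/(abse \o (EFin \o f)) fune_abse.
  rewrite ge0_integralD //; [|exact: measurable_funepos|exact: measurable_funeneg].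
  by rewrite -(fineK neg_fin); case: (\int[mu]_x _).
by rewrite integralE pos_pinfty -(fineK neg_fin).
Qed.

Lemma integralD_ge0_integrable mu g h :
  measurable_fun setT g -> (forall x, 0 <= g x)%R ->
  mu.-integrable setT (EFin \o h) ->
  \int[mu]_x (g x + h x)%:E = \int[mu]_x (g x)%:E + \int[mu]_x (h x)%:E.
Proof.
move=> mg g0 ih; have [ig|nig] := pselect (mu.-integrable setT (EFin \o g)).
  by under eq_integral do rewrite EFinD; exact: integralD.
have g_pinfty : \int[mu]_x (g x)%:E = +oo.
  apply/eqP; rewrite eq_le leey /= leNgt; apply/negP => g_fin.
  apply: nig; apply/integrableP; split; first exact/measurable_EFinP.
  by under eq_integral do rewrite gee0_abs ?lee_fin //.
have mgh : measurable_fun setT (fun x => g x + h x)%R.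
  by apply: measurable_funD => //; move/measurable_int/measurable_EFinP : ih.
rewrite g_pinfty -(fineK (integrable_fin_num measurableT ih)) addye //.
apply: (integral_pinfty_of_not_integrable mgh ih) => [x|igh]; first by rewrite lerDr.
apply: nig; apply: eq_integrable (integrableB measurableT igh ih) => // x _.
by rewrite /= -EFinB addrK.
Qed.

End integral_lemmas.

Lemma integral_negpart_affine_cvg0 {R : realType} {eta : {measure set R -> \bar R}} :
  eta.-integrable setT (fun x => x%:E) -> forall s : R,
  (\int[eta]_x (Num.max (- (n%:R + s * x)) 0)%:E @[n --> \oo] --> 0)%E.
Proof.
move=> eta_id s.
have dom_int : eta.-integrable setT (fun x => `|s * x|%:E).
  under eq_fun do rewrite normrM EFinM.
  by apply: integrableZl => //; exact: (integrable_abse eta_id).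
have [] := @dominated_convergence _ _ R eta setT measurableT
  (fun n x => (Num.max (- (n%:R + s * x)) 0)%:E) (cst 0) (fun x => `|s * x|%:E).
- move=> n; apply/measurable_EFinP/measurable_maxr => //.
  by apply/measurable_funN/measurable_funD => //; exact: measurable_funM.
- by [].
- apply: aeW => x _; apply: cvg_near_cst.
  exists (Num.truncn (- (s * x))).+1 => // n /= hn.
  have := truncnS_gt (- (s * x)); rewrite -(ler_nat R) in hn.
  by move=> ?; congr EFin; apply/max_r; lra.
- exact: dom_int.
- apply: aeW => x n _ /=; rewrite lee_fin ger0_norm ?le_max ?lexx ?orbT //.
  rewrite ge_max normr_ge0 andbT.
  have := ler_norm (- (s * x)); rewrite normrN; have : (0 <= n%:R :> R)%R by []; lra.
- by move=> _ _; rewrite integral0.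
Qed.

Section affine_moments.
Local Open Scope ereal_scope.
Context {R : realType} {eta : {finite_measure set R -> \bar R}}.
Hypothesis eta_id : eta.-integrable setT (fun x => x%:E).

Lemma integrable_affine (a s : R) : eta.-integrable setT (fun x => (a + s * x)%:E).
Proof.
under eq_fun do rewrite EFinD EFinM.
apply: integrableD => //; first exact: finite_measure_integrable_cst.
exact: integrableZl.
Qed.

Lemma integral_affine (a s : R) :
  \int[eta]_x (a + s * x)%:E = (a * mass eta + s * moment1 eta)%:E.
Proof.
under eq_integral do rewrite EFinD EFinM.
rewrite integralD //; [|exact: finite_measure_integrable_cst|exact: integrableZl].
rewrite integralZl // integral_cst // /mass /moment1 EFinD !EFinM.
by rewrite fineK ?fin_num_measure // fineK // (integrable_fin_num measurableT eta_id).
Qed.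

Lemma integral_addr_affine (g : R -> R) (a s : R) :
  measurable_fun setT g -> (forall x, 0 <= g x)%R ->
  \int[eta]_x (g x + (a + s * x))%:E =
  \int[eta]_x (g x)%:E + (a * mass eta + s * moment1 eta)%:E.
Proof.
by move=> mg g0; rewrite integralD_ge0_integrable ?integral_affine ?integrable_affine.
Qed.

End affine_moments.

Section le_E.
Local Open Scope ereal_scope.
Context {R : realType} {mu nu : {finite_measure set R -> \bar R}}.
Hypotheses (mu_id : mu.-integrable setT (fun x => x%:E))
  (nu_id : nu.-integrable setT (fun x => x%:E)) (hE : le_E mu nu).

Lemma le_E_mass : (mass mu <= mass nu)%R.
Proof.
have := hE _ (convexR_cst 1%R) (fun=> ler01).
by rewrite !integral_cst //= !mul1e -lee_fin /mass !fineK ?fin_num_measure.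
Qed.

Lemma le_E_moment1_le (s : R) : mass mu = mass nu ->
  (s * (moment1 mu - moment1 nu) <= 0)%R.
Proof.
move=> mass_eq; pose psi (n : nat) (x : R) := (Num.max (- (n%:R + s * x)) 0)%R.
have mpsi n : measurable_fun setT (psi n).
  by apply: measurable_maxr => //; apply/measurable_funN/measurable_funD.
have psi0 n x : (0 <= psi n x)%R by rewrite le_max lexx orbT.
have bound n : (s * (moment1 mu - moment1 nu))%:E <= \int[nu]_x (psi n x)%:E.
  have posE (eta : {finite_measure set R -> \bar R}) :
      eta.-integrable setT (fun x => x%:E) ->
      \int[eta]_x (Num.max (n%:R + s * x) 0)%:E =
      \int[eta]_x (psi n x)%:E + (n%:R * mass eta + s * moment1 eta)%:E.
    move=> eta_id; under eq_integral do rewrite max0_split.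
    exact: integral_addr_affine eta_id (psi n) _ _ (mpsi n) (psi0 n).
  have pos0 x : (0 <= Num.max (n%:R + s * x) 0)%R by rewrite le_max lexx orbT.
  have := hE _ (convexR_max0_affine n%:R s) pos0.
  rewrite !posE // mass_eq => int_le.
  have -> : (s * (moment1 mu - moment1 nu) =
    (n%:R * mass nu + s * moment1 mu) - (n%:R * mass nu + s * moment1 nu))%R by ring.
  rewrite EFinB leeBlDr //; apply: le_trans int_le.
  by apply: leeDr; apply: integral_ge0 => x _; rewrite lee_fin.
have tail_cvg := integral_negpart_affine_cvg0 nu_id s.
suff : (s * (moment1 mu - moment1 nu))%:E <= 0 by [].
rewrite -(cvg_lim _ tail_cvg) //; apply: lime_ge; last exact: nearW.
by apply/cvg_ex; exists 0.
Qed.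

Lemma le_E_moment1 : mass mu = mass nu -> moment1 mu = moment1 nu.
Proof.
move=> mass_eq; have := le_E_moment1_le 1 mass_eq; have := le_E_moment1_le (-1) mass_eq.
lra.
Qed.

Lemma le_E_convex_gap (f : R -> R) (c : R) : convexR f ->
  ((mass nu - mass mu) * c = moment1 nu - moment1 mu)%R ->
  ((mass nu - mass mu) * f c)%:E + \int[mu]_x (f x)%:E <= \int[nu]_x (f x)%:E.
Proof.
move=> cf c_balance; have [s support] := convexR_support_line c cf.
pose a := (f c - s * c)%R; pose g x := (f x - (a + s * x))%R.
have g0 x : (0 <= g x)%R by rewrite subr_ge0 /a; have := support x; lra.
have fE (eta : {finite_measure set R -> \bar R}) :
    eta.-integrable setT (fun x => x%:E) ->
    \int[eta]_x (f x)%:E = \int[eta]_x (g x)%:E + (a * mass eta + s * moment1 eta)%:E.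
  move=> eta_id; rewrite -integral_addr_affine //.
    by apply: eq_integral => x _; rewrite /g subrK.
  exact: convexR_measurable (convexR_sub_affine a s cf).
rewrite !fE // addeCA; apply: leeD; first exact: hE _ (convexR_sub_affine a s cf) g0.
rewrite -EFinD lee_fin; have : (a * (mass nu - mass mu) + s * (moment1 nu - moment1 mu)
  = (mass nu - mass mu) * f c)%R by rewrite -c_balance /a; ring.
lra.
Qed.

(* If the mass gap vanishes, the atom is x / 0 = 0 and the means agree. *)
Lemma beta_atom_balance : ((mass nu - mass mu) *
  ((moment1 nu - moment1 mu) / (mass nu - mass mu)) = moment1 nu - moment1 mu)%R.
Proof.
have [m0|m_neq0] := eqVneq (mass nu - mass mu)%R 0%R; last by rewrite mulrC divfK.
by rewrite m0 mul0r le_E_moment1 ?subrr //; apply/esym/eqP; rewrite -subr_eq0 m0.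
Qed.

Lemma integral_beta (f : R -> R) : measurable_fun setT f ->
  \int[beta mu nu]_x (f x)%:E = ((mass nu - mass mu) *
    f ((moment1 nu - moment1 mu) / (mass nu - mass mu)))%:E.
Proof.
by move=> mf; rewrite integral_mscale_dirac //= max_r // subr_ge0 le_E_mass.
Qed.

Lemma beta_convex_gap (f : R -> R) : convexR f ->
  \int[beta mu nu]_x (f x)%:E + \int[mu]_x (f x)%:E <= \int[nu]_x (f x)%:E.
Proof.
move=> cf; rewrite integral_beta; last exact: convexR_measurable cf.
exact: le_E_convex_gap cf beta_atom_balance.
Qed.

Lemma Pput_beta (k : R) : Pput (beta mu nu) k =
  (Num.max ((mass nu - mass mu) * k - (moment1 nu - moment1 mu)) 0)%:E.
Proof.
rewrite /Pput integral_beta; last exact: convexR_measurable (convexR_put k).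
by rewrite maxr_pMr ?subr_ge0 ?le_E_mass // mulr0 mulrBr beta_atom_balance.
Qed.

End le_E.

Theorem corollary3p6 (R : realType)
  (mu nu : {finite_measure set R -> \bar R})
  (hmu : mu.-integrable setT (fun x => x%:E))
  (hnu : nu.-integrable setT (fun x => x%:E))
  (hE : le_E mu nu) :
  (forall f : R -> R, convexR f ->
     (\int[beta mu nu]_x (f x)%:E + \int[mu]_x (f x)%:E
        <= \int[nu]_x (f x)%:E)%E)
  /\ (forall k : R, (Pput (beta mu nu) k + Pput mu k <= Pput nu k)%E)
  /\ (forall k : R, Pput (beta mu nu) k =
        (Num.max ((mass nu - mass mu) * k - (moment1 nu - moment1 mu)) 0)%:E).
Proof.
split; first exact: beta_convex_gap hmu hnu hE.
split=> k; last exact: Pput_beta hmu hnu hE k.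
exact: beta_convex_gap hmu hnu hE _ (convexR_put k).
Qed.
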